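(* Let $H_1,H_2$ be separable Hilbert spaces, $K\in B(H_1)$ and $L\in B(H_2)$. If a sequence $\{x_n\oplus y_n\}_{n\geqslant1}$ in $H_1\oplus H_2$ is a $K\oplus L$-frame for $H_1\oplus H_2$, then $\{x_n\}_{n\geqslant1}$ is a $K$-frame for $H_1$ and $\{y_n\}_{n\geqslant1}$ is an $L$-frame for $H_2$.
   Context: $H_1\oplus H_2$ is the Hilbert space of pairs $x\oplus y$ with inner product $\langle x\oplus y,a\oplus b\rangle=\langle x,a\rangle+\langle y,b\rangle$. For $K\in B(H_1)$, $L\in B(H_2)$, $K\oplus L\in B(H_1\oplus H_2)$ is defined by $(K\oplus L)(x\oplus y)=K(x)\oplus L(y)$. For a Hilbert space $H$ and $K\in B(H)$, a sequence $\{z_n\}_{n\geqslant1}$ in $H$ is a $K$-frame if there are $A,B>0$ with $A\|K^*z\|^2\leq\sum_{n=1}^\infty|\langle z,z_n\rangle|^2\leq B\|z\|^2$ for all $z\in H$. *)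

From HB Require Import structures.
From mathcomp Require Import all_boot all_order all_algebra.
From mathcomp Require Import all_classical all_reals ereal sequences.
From mathcomp Require Import complex.
Set Implicit Arguments. Unset Strict Implicit. Unset Printing Implicit Defensive.
Import Order.TTheory GRing.Theory Num.Theory.
Local Open Scope ring_scope.

Section HilbertDefs.
Variable R : realType.
Local Notation C := R[i].

Definition sqmod (c : C) : R := (complex.Re c) ^+ 2 + (complex.Im c) ^+ 2.

Variable V : lmodType C.
Variable ip : V -> V -> C.

Definition inner_product_axioms : Prop :=
  [/\ (forall (a : C) (x y z : V), ip (a *: x + y) z = a * ip x z + ip y z),
      (forall x y : V, ip y x = (ip x y)^*%C),
      (forall x : V, 0 <= complex.Re (ip x x)) &
      (forall x : V, ip x x = 0 -> x = 0)].

Definition ipnorm (x : V) : R := Num.sqrt (complex.Re (ip x x)).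

Definition ip_complete : Prop :=
  forall u : nat -> V,
    (forall e : R, 0 < e -> exists N : nat, forall m n : nat,
        (N <= m)%N -> (N <= n)%N -> ipnorm (u m - u n) < e) ->
    exists l : V, forall e : R, 0 < e -> exists N : nat, forall n : nat,
        (N <= n)%N -> ipnorm (u n - l) < e.

Definition ip_separable : Prop :=
  exists d : nat -> V, forall (x : V) (e : R), 0 < e ->
    exists n : nat, ipnorm (x - d n) < e.

Definition hilbert : Prop := inner_product_axioms /\ ip_complete.

Definition separable_hilbert : Prop := hilbert /\ ip_separable.

Definition bounded_op (K : V -> V) : Prop :=
  (forall (a : C) (x y : V), K (a *: x + y) = a *: K x + K y) /\
  exists M : R, forall x : V, ipnorm (K x) <= M * ipnorm x.

Definition is_adjoint (K Ks : V -> V) : Prop :=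
  forall x y : V, ip (K x) y = ip x (Ks y).

Definition K_frame (K : V -> V) (zs : nat -> V) : Prop :=
  exists A B : R, 0 < A /\ 0 < B /\
    exists Ks : V -> V, is_adjoint K Ks /\
      forall z : V,
        ((A * ipnorm (Ks z) ^+ 2)%:E <=
           \sum_(0 <= n <oo) (sqmod (ip z (zs n)))%:E)%E /\
        (\sum_(0 <= n <oo) (sqmod (ip z (zs n)))%:E <=
           (B * ipnorm z ^+ 2)%:E)%E.

End HilbertDefs.

Definition dsum_ip (R : realType) (V1 V2 : lmodType R[i])
  (ip1 : V1 -> V1 -> R[i]) (ip2 : V2 -> V2 -> R[i]) :
  (V1 * V2)%type -> (V1 * V2)%type -> R[i] :=
  fun p q => ip1 p.1 q.1 + ip2 p.2 q.2.

Definition dsum_op (V1 V2 : Type) (K : V1 -> V1) (L : V2 -> V2) :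
  (V1 * V2)%type -> (V1 * V2)%type :=
  fun p => (K p.1, L p.2).

From HB Require Import structures.
From mathcomp Require Import all_boot all_order all_algebra.
From mathcomp Require Import all_classical all_reals ereal sequences.
From mathcomp Require Import complex.
Import Order.TTheory GRing.Theory Num.Theory.
Local Open Scope ring_scope.

(* The inclusion e : v |-> (v, 0) of H1 into H1 ⊕ H2 is an isometry whose
   adjoint p is the first projection, a contraction; p maps x_n ⊕ y_n to x_n
   and e intertwines K with K ⊕ L.  Pulling the K ⊕ L-frame inequalities back
   along e gives the K-frame inequalities with the same bounds, p ∘ (K ⊕ L)^* ∘ e
   being an adjoint of K. *)

Lemma ip0l {R : realType} {V : lmodType R[i]} {ip : V -> V -> R[i]} :
  (forall (a : R[i]) (x y z : V), ip (a *: x + y) z = a * ip x z + ip y z) ->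
  forall z, ip 0 z = 0.
Proof.
move=> ip_linear z; have := ip_linear (-1) 0 0 z.
by rewrite scaler0 add0r mulN1r addNr.
Qed.

Lemma bounded_op0 {R : realType} {V : lmodType R[i]} {ip : V -> V -> R[i]}
  {K : V -> V} : bounded_op ip K -> K 0 = 0.
Proof.
case=> K_linear _; have := K_linear (-1) 0 0.
by rewrite scaler0 add0r scaleN1r addNr.
Qed.

Section KFrameCompression.
Context {R : realType} {V W : lmodType R[i]}.
Context {ipV : V -> V -> R[i]} {ipW : W -> W -> R[i]}.
Variables (e : V -> W) (p : W -> V).
Hypothesis ip_e : forall u w, ipW (e u) w = ipV u (p w).
Hypothesis eK : cancel e p.
Hypothesis ipnorm_p : forall w, ipnorm ipV (p w) <= ipnorm ipW w.

Lemma ipnorm_e u : ipnorm ipW (e u) = ipnorm ipV u.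
Proof. by rewrite /ipnorm ip_e eK. Qed.

Lemma ipnorm_p_sqr w : ipnorm ipV (p w) ^+ 2 <= ipnorm ipW w ^+ 2.
Proof. by rewrite lerXn2r ?nnegrE ?sqrtr_ge0. Qed.

Lemma K_frame_compress (K : V -> V) (KW : W -> W) (xs : nat -> V)
    (ws : nat -> W) :
  (forall u, e (K u) = KW (e u)) -> (forall n, p (ws n) = xs n) ->
  K_frame ipW KW ws -> K_frame ipV K xs.
Proof.
move=> KW_e p_ws [A [B [A_gt0 [B_gt0 [Ks [Ks_adj frame]]]]]].
exists A, B; do 2![split => //].
exists (p \o Ks \o e); split.
  by move=> u v /=; rewrite -ip_e -Ks_adj -KW_e ip_e eK.
move=> z; have [lower upper] := frame (e z).
have sum_e : (\sum_(0 <= n <oo) (sqmod (ipW (e z) (ws n)))%:E =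
              \sum_(0 <= n <oo) (sqmod (ipV z (xs n)))%:E)%E.
  by apply: eq_eseriesr => n _; rewrite ip_e p_ws.
rewrite -sum_e -(ipnorm_e z); split => //.
apply: le_trans lower; rewrite lee_fin ler_wpM2l ?(ltW A_gt0) //.
exact: ipnorm_p_sqr.
Qed.

End KFrameCompression.

Section DirectSum.
Context {R : realType} {V1 V2 : lmodType R[i]}.
Context {ip1 : V1 -> V1 -> R[i]} {ip2 : V2 -> V2 -> R[i]}.
Hypothesis ip1_0l : forall v, ip1 0 v = 0.
Hypothesis ip2_0l : forall v, ip2 0 v = 0.
Hypothesis ip1_ge0 : forall v, 0 <= complex.Re (ip1 v v).
Hypothesis ip2_ge0 : forall v, 0 <= complex.Re (ip2 v v).
Local Notation ip := (dsum_ip ip1 ip2).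

Lemma ipnorm_dsum_fst (w : V1 * V2) : ipnorm ip1 w.1 <= ipnorm ip w.
Proof. by rewrite /ipnorm /dsum_ip raddfD /= ler_sqrt ?lerDl ?addr_ge0. Qed.

Lemma ipnorm_dsum_snd (w : V1 * V2) : ipnorm ip2 w.2 <= ipnorm ip w.
Proof. by rewrite /ipnorm /dsum_ip raddfD /= ler_sqrt ?lerDr ?addr_ge0. Qed.

Lemma K_frame_dsum_fst {K : V1 -> V1} {L : V2 -> V2} {xs ys} :
  L 0 = 0 -> K_frame ip (dsum_op K L) (fun n => (xs n, ys n)) ->
  K_frame ip1 K xs.
Proof.
move=> L0; apply: (K_frame_compress (fun v => (v, 0)) fst).
- by move=> u w; rewrite /dsum_ip ip2_0l addr0.
- by [].
- exact: ipnorm_dsum_fst.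
- by move=> u; rewrite /dsum_op L0.
- by [].
Qed.

Lemma K_frame_dsum_snd {K : V1 -> V1} {L : V2 -> V2} {xs ys} :
  K 0 = 0 -> K_frame ip (dsum_op K L) (fun n => (xs n, ys n)) ->
  K_frame ip2 L ys.
Proof.
move=> K0; apply: (K_frame_compress (fun v => (0, v)) snd).
- by move=> u w; rewrite /dsum_ip ip1_0l add0r.
- by [].
- exact: ipnorm_dsum_snd.
- by move=> u; rewrite /dsum_op K0.
- by [].
Qed.

End DirectSum.

Theorem corollary2p5 (R : realType) (V1 V2 : lmodType R[i])
  (ip1 : V1 -> V1 -> R[i]) (ip2 : V2 -> V2 -> R[i])
  (H1 : separable_hilbert ip1) (H2 : separable_hilbert ip2)
  (K : V1 -> V1) (L : V2 -> V2)
  (hK : bounded_op ip1 K) (hL : bounded_op ip2 L)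
  (x : nat -> V1) (y : nat -> V2) :
  K_frame (dsum_ip ip1 ip2) (dsum_op K L) (fun n => (x n, y n)) ->
  K_frame ip1 K x /\ K_frame ip2 L y.
Proof.
move: H1 H2 => [[[ip1_linear _ ip1_ge0 _] _] _] [[[ip2_linear _ ip2_ge0 _] _] _].
move=> frame; split.
- exact: (K_frame_dsum_fst (ip0l ip2_linear) ip1_ge0 ip2_ge0 (bounded_op0 hL) frame).
- exact: (K_frame_dsum_snd (ip0l ip1_linear) ip1_ge0 ip2_ge0 (bounded_op0 hK) frame).
Qed.
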